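(* Let $n\ge q\ge1$ be integers, $\lambda\in(0,1)$, and $r=\lceil n/q\rceil$. Then \[ \frac{r-(r-1)\lambda}{r} \;\ge\; \eta_\lambda(n,q) \;\ge\; \frac{r-(r-1)\lambda}{r+\lambda}. \] Furthermore, the graph $G$ on vertex set $[n]$ in which distinct $i,j$ are adjacent if and only if $i\equiv j \pmod r$ (so $G$ is a disjoint union of $r$ cliques and $\overline{P}(G;i)=\lceil i/r\rceil$) belongs to $\mathcal{G}_{n,q}$ and satisfies $\gamma_\lambda(G)\ge\frac{r-(r-1)\lambda}{r+\lambda}$.
   Context: For a finite base set $S$ and $f:2^S\to\mathbb{R}_{\ge0}$, write $f(A\mid B)=f(A\cup B)-f(B)$. $f$ is normalized if $f(\emptyset)=0$, monotone if $f(\{e\}\mid A)\ge0$ for all $e,A$, submodular if $f(\{e\}\mid A)\ge f(\{e\}\mid B)$ for $A\subseteq B\subseteq S$, $e\in S\setminus B$. Such $f$ has total curvature $\lambda\in(0,1)$ if $f(\{e\}\mid A)\ge(1-\lambda)f(\{e\})$ for all $e\in S$ and $A\subseteq S\setminus\{e\}$; $\mathcal{F}_\lambda$ is the set of normalized, monotone, submodular functions with total curvature $\lambda$. There are $n$ agents $[n]$ with decision sets $X_i\subseteq S$ forming a partition of $S$; action profiles $x\in X=X_1\times\cdots\times X_n$ are valued by $f(x)=f(\{x_1,\dots,x_n\})$, and $x_M=\{x_i:i\in M\}$. Let $x^{\mathrm{opt}}\in\arg\max_{x\in X}f(x)$. Given an undirected graph $G=([n],E)$ (information graph), let $\mathcal{N}_i=\{j<i:(j,i)\in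 E\}$. The generalized greedy algorithm produces $x^{\mathrm{sol}}$ with $x^{\mathrm{sol}}_i\in\arg\max_{x_i\in X_i}f(x_i\mid x^{\mathrm{sol}}_{\mathcal{N}_i})$, taking the worst among all possible greedy outcomes. Define $\gamma(f,X,G)=f(x^{\mathrm{sol}})/f(x^{\mathrm{opt}})$ and $\gamma_\lambda(G)=\inf_{f\in\mathcal{F}_\lambda,X}\gamma(f,X,G)$. Define recursively $\overline{P}(G;i)=1$ if $\mathcal{N}_i=\emptyset$ and $\overline{P}(G;i)=1+\max_{j\in\mathcal{N}_i}\overline{P}(G;j)$ otherwise; let $\mathcal{G}_{n,q}$ be the set of graphs on $[n]$ with $\max_i\overline{P}(G;i)\le q$, and $\eta_\lambda(n,q)=\sup_{G\in\mathcal{G}_{n,q}}\gamma_\lambda(G)$. *)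

From HB Require Import structures.
From mathcomp Require Import classical_sets reals.
From mathcomp Require Import all_boot all_order all_algebra.
Set Implicit Arguments. Unset Strict Implicit. Unset Printing Implicit Defensive.
Import Order.TTheory GRing.Theory Num.Theory.
Local Open Scope ring_scope.


Section SetFunctions.
Variables (R : realType) (S : finType).
Implicit Types (f : {set S} -> R) (A B : {set S}).

Definition marg f A B : R := f (A :|: B) - f B.

Definition nonnegf f := forall A, 0 <= f A.
Definition normalized f := f set0 = 0.
Definition monotone f := forall (e : S) A, 0 <= marg f [set e] A.
Definition submodular f :=
  forall A B (e : S), A \subset B -> e \notin B -> marg f [set e] B <= marg f [set e] A.
Definition total_curvature (lam : R) f :=
  forall (e : S) A, e \notin A -> (1 - lam) * f [set e] <= marg f [set e] A.

Definition in_F (lam : R) f :=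
  [/\ nonnegf f, normalized f, monotone f, submodular f & total_curvature lam f].

(* agents 'I_n (agent k corresponds to k+1 in [n]); decision sets partition S *)
Definition is_partition n (X : 'I_n -> {set S}) :=
  [/\ forall i, X i != set0,
      forall i j, i != j -> [disjoint X i & X j]
    & forall e : S, exists i, e \in X i].

Definition is_profile n (X : 'I_n -> {set S}) (x : {ffun 'I_n -> S}) :=
  [forall i, x i \in X i].

Definition xset n (x : {ffun 'I_n -> S}) (M : {set 'I_n}) : {set S} :=
  [set x i | i in M].

Definition fval n f (x : {ffun 'I_n -> S}) : R := f (xset x setT).

Definition fopt n f (X : 'I_n -> {set S}) : R :=
  \big[Num.max/0]_(x : {ffun 'I_n -> S} | is_profile X x) fval f x.

End SetFunctions.

Definition is_graph n (e : rel 'I_n) := symmetric e /\ irreflexive e.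

Definition nbrs n (e : rel 'I_n) (i : 'I_n) : {set 'I_n} :=
  [set j : 'I_n | (j < i)%N && e j i].

Definition is_greedy (R : realType) (S : finType) n (f : {set S} -> R)
    (X : 'I_n -> {set S}) (e : rel 'I_n) (x : {ffun 'I_n -> S}) :=
  is_profile X x /\
  forall i (y : S), y \in X i ->
    marg f [set y] (xset x (nbrs e i)) <= marg f [set x i] (xset x (nbrs e i)).

Definition gamma_fXG (R : realType) (S : finType) n (f : {set S} -> R)
    (X : 'I_n -> {set S}) (e : rel 'I_n) : R :=
  inf [set fval f x / fopt f X | x in [set x | is_greedy f X e x]]%classic.

(* gamma_lam(G): infimum over all finite base sets S, f in F_lam and
   partitions X (with f(x^opt) > 0, i.e. f not identically zero) *)
Definition gamma_lam (R : realType) (lam : R) n (e : rel 'I_n) : R :=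
  inf [set g : R | exists (S : finType) (f : {set S} -> R) (X : 'I_n -> {set S}),
         [/\ in_F lam f, is_partition X, 0 < fopt f X & g = gamma_fXG f X e]]%classic.

(* \overline{P}(G;i), computed by structural recursion with fuel k;
   with fuel n (number of agents) the fuel never runs out, since every
   recursive call goes to a strictly smaller index. \max over an empty
   neighbourhood is 0, giving the value 1 when N_i is empty. *)
Fixpoint pbar_fuel n (e : rel 'I_n) (k : nat) (i : 'I_n) : nat :=
  if k is k'.+1 then
    (\max_(j : 'I_n | (j < i)%N && e j i) pbar_fuel e k' j).+1
  else 1%N.

Definition pbar n (e : rel 'I_n) (i : 'I_n) : nat := pbar_fuel e n i.

Definition in_Gnq n (q : nat) (e : rel 'I_n) :=
  is_graph e /\ forall i : 'I_n, (pbar e i <= q)%N.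

Definition eta_lam (R : realType) (lam : R) (n q : nat) : R :=
  sup [set g : R | exists e : rel 'I_n, in_Gnq q e /\ g = gamma_lam lam e]%classic.

(* distinct i, j adjacent iff i = j mod r (0-based labels; same relation
   as for the 1-based labels i+1, j+1) *)
Definition modgraph (n r : nat) : rel 'I_n :=
  fun i j => (i != j) && (i == j %[mod r])%N.
Arguments modgraph : clear implicits.

From HB Require Import structures.
From mathcomp Require Import classical_sets reals.
From mathcomp Require Import all_boot all_order all_algebra.
From mathcomp Require Import lra zify ring.
Import Order.TTheory GRing.Theory Num.Theory.
Local Open Scope ring_scope.
Set Implicit Arguments. Unset Strict Implicit. Unset Printing Implicit Defensive.

(* Upper bound: the levels of pbar take at most q values and are independent sets (an edge
   from j < i forces pbar j < pbar i), so some level I has m >= ceil(n/q) agents.  On an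
   instance where each agent of I chooses between a lure and a target, these agents may all
   greedily take lures, which gives the ratio (m - (m - 1) lam) / m.
   Lower bound: on the union of the r cliques of residues mod r, the greedy gains telescope
   along each clique.  With G the sum of all gains and G_c its part on the class c, curvature
   gives (1 - lam) G + lam G_c <= f(x) for each class, while submodularity and the greedy
   choices give f(opt) <= f(x) + lam G.  Summing over the r classes and eliminating G yields
   (r - (r - 1) lam) f(opt) <= (r + lam) f(x). *)

Lemma finset_ind (T : finType) (P : {set T} -> Prop) :
  P set0 -> (forall (a : T) (A : {set T}), a \notin A -> P A -> P (a |: A)) -> forall A, P A.
Proof.
move=> P0 PU A; elim: {A}#|A| {-2}A (erefl #|A|) => [|k IH] A cardA.
  by rewrite (cards0_eq cardA).
have [a aA] : {a | a \in A} by apply/sigW/card_gt0P; rewrite cardA.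
rewrite -(setD1K aA); apply: PU; first by rewrite !inE eqxx.
by apply: IH; move: cardA; rewrite (cardsD1 a) aA add1n => -[].
Qed.

Section SetFunctionBounds.
Variables (R : realType) (S : finType) (lam : R) (f : {set S} -> R).
Hypothesis fF : in_F lam f.
Implicit Types (a e : S) (A B : {set S}).

Lemma marg_addE e A : f (e |: A) = f A + marg f [set e] A.
Proof. by rewrite /marg addrC subrK. Qed.

Lemma marg_mem e A : e \in A -> marg f [set e] A = 0.
Proof. by move=> eA; rewrite /marg (setUidPr _) ?subrr // sub1set. Qed.

Lemma marg_ge0 e A : 0 <= marg f [set e] A.
Proof. by case: fF => _ _ + _ _; apply. Qed.

Lemma marg_antimonotone e A B : A \subset B -> marg f [set e] B <= marg f [set e] A.
Proof.
move=> AB; have [eB|eB] := boolP (e \in B); first by rewrite marg_mem ?marg_ge0.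
by case: fF => _ _ _ + _; apply.
Qed.

Lemma marg_le_single e A : marg f [set e] A <= f [set e].
Proof.
have := marg_antimonotone e (sub0set A).
by case: fF => _ f0 _ _ _; rewrite /marg setU0 f0 subr0.
Qed.

Lemma f_monotone A B : A \subset B -> f A <= f B.
Proof.
move=> AB; rewrite -(setID B A) (setIidPr AB).
elim/finset_ind: (B :\: A) => [|a C _ IH]; first by rewrite setU0.
by rewrite setUCA marg_addE (le_trans IH) ?lerDl ?marg_ge0.
Qed.

Lemma submodular_sum_bound A B : f (A :|: B) <= f B + \sum_(a in A) marg f [set a] B.
Proof.
elim/finset_ind: A => [|a A aA IH]; first by rewrite set0U big_set0 addr0.
rewrite -setUA (marg_addE a) big_setU1 //= [leRHS]addrCA addrC.
by apply: lerD => //; apply: marg_antimonotone; apply: subsetUr.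
Qed.

Lemma curvature_sum_bound A B :
  [disjoint A & B] -> f B + (1 - lam) * \sum_(a in A) f [set a] <= f (A :|: B).
Proof.
elim/finset_ind: A => [|a A aA IH] dis; first by rewrite big_set0 mulr0 addr0 set0U.
have aB : a \notin B by rewrite (disjointFr dis) ?setU11.
have curv : (1 - lam) * f [set a] <= marg f [set a] (A :|: B).
  by case: fF => _ _ _ _; apply; rewrite in_setU negb_or aA.
rewrite -setUA (marg_addE a) big_setU1 //= mulrDr [leLHS]addrCA addrC.
by apply: lerD => //; apply: IH; apply: disjointWl dis; apply: subsetUr.
Qed.

End SetFunctionBounds.

Lemma greedy_exists (R : realType) (S : finType) n (f : {set S} -> R)
    (X : 'I_n -> {set S}) (e : rel 'I_n) :
  (forall i, X i != set0) -> exists x, is_greedy f X e x.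
Proof.
move=> X0; pose gain x i y := marg f [set y] (xset x (nbrs e i)).
have argmax x i : exists2 y, y \in X i & forall z, z \in X i -> gain x i z <= gain x i y.
  have [y0 y0X] := set0Pn _ (X0 i).
  by case: (arg_maxP (gain x i) y0X) => y yX ymax; exists y.
suff /(_ n (leqnn n)) [x [px gx]] : forall k, (k <= n)%N -> exists x, is_profile X x /\
    forall i : 'I_n, (i < k)%N -> forall y, y \in X i -> gain x i y <= gain x i (x i).
  by exists x; split=> // i; apply: gx.
elim=> [|k IHk] kn.
  exists [ffun i => xchoose (set0Pn _ (X0 i))]; split=> //.
  by apply/forallP => i; rewrite ffunE; apply: xchooseP.
have [x [px gx]] := IHk (ltnW kn); pose kk := Ordinal kn.
have [y yX ymax] := argmax x kk.
pose x' := [ffun i => if i == kk then y else x i].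
have nbrs_fixed (i : 'I_n) : (i <= k)%N -> xset x' (nbrs e i) = xset x (nbrs e i).
  move=> ik; apply: eq_in_imset => j; rewrite inE => /andP [ji _].
  by rewrite ffunE ifN // -val_eqE /= neq_ltn (leq_trans ji ik).
exists x'; split.
  by apply/forallP => i; rewrite ffunE; case: eqP => [->|_] //; apply: (forallP px).
move=> i; rewrite ltnS leq_eqVlt => /orP [/eqP ik | ik] z zX.
  have {}ik : i = kk by apply: val_inj.
  by rewrite {}ik in zX *; rewrite /gain nbrs_fixed // ffunE eqxx; apply: ymax.
rewrite /gain nbrs_fixed 1?ltnW // ffunE ifN; first exact: gx.
by rewrite -val_eqE /= ltn_eqF.
Qed.

Lemma partition_profile_eq (S : finType) n (X : 'I_n -> {set S})
    (x o : {ffun 'I_n -> S}) i j :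
  is_partition X -> is_profile X x -> is_profile X o -> x i = o j -> i = j.
Proof.
case=> _ disX _ /forallP px /forallP po xo; apply/eqP/negP => /negP/disX dis.
by move: (disjointFr dis (px i)); rewrite xo po.
Qed.

Lemma imset_union_diff (I T : finType) (x o : I -> T) :
  [set x i | i in [set: I]] :|: [set o i | i in [set: I]]
    = [set o i | i in [set i | x i != o i]] :|: [set x i | i in [set: I]].
Proof.
apply/eqP; rewrite eqEsubset !subUset subsetUr subsetUl andbT /=.
apply/andP; split; last by rewrite subsetU // imsetS ?subsetT ?orbT.
apply/subsetP => _ /imsetP [i _ ->]; rewrite in_setU.
have [xo|xo] := eqVneq (x i) (o i); first by rewrite -xo imset_f ?orbT ?inE.
by rewrite imset_f ?inE.
Qed.

Definition greedy_gain (R : realType) (S : finType) n (f : {set S} -> R)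
    (e : rel 'I_n) (x : {ffun 'I_n -> S}) (i : 'I_n) : R :=
  marg f [set x i] (xset x (nbrs e i)).

Section GreedyOutcome.
Variables (R : realType) (S : finType) (lam : R) (f : {set S} -> R).
Variables (n : nat) (X : 'I_n -> {set S}) (e : rel 'I_n) (x : {ffun 'I_n -> S}).
Hypotheses (fF : in_F lam f) (lam01 : 0 < lam < 1) (partX : is_partition X)
  (greedy_x : is_greedy f X e x).

Local Notation gain := (greedy_gain f e x).

Lemma greedy_injective : injective x.
Proof. by case: greedy_x => px _ i j; exact: (partition_profile_eq partX px px). Qed.

Lemma opt_le_greedy_add_gain (o : {ffun 'I_n -> S}) : is_profile X o ->
  fval f o <= fval f x + lam * \sum_i gain i.
Proof.
move=> po; have [lam0 lam1] := andP lam01; have [px gx] := greedy_x.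
have o_inj : injective o by move=> i j; exact: (partition_profile_eq partX po po).
set Os := xset o setT; set Xs := xset x setT; pose D := [set i | x i != o i].
have xD_Os : [disjoint [set x i | i in D] & Os].
  rewrite -setI_eq0; apply/eqP/setP => y; rewrite !inE.
  apply/negbTE/andP => -[/imsetP [i iD ->] /imsetP [j _ xo]].
  by move: iD; rewrite inE xo (partition_profile_eq partX px po xo) eqxx.
have curv := curvature_sum_bound fF xD_Os.
rewrite big_imset /= in curv; last by move=> i j _ _; apply: greedy_injective.
have mono : f ([set x i | i in D] :|: Os) <= f (Xs :|: Os).
  by apply: (f_monotone fF); rewrite setSU // imsetS // subsetT.
have submod := submodular_sum_bound fF [set o i | i in D] Xs.
rewrite -imset_union_diff big_imset /= in submod; last by move=> i j _ _; apply: o_inj.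
have opt_gain : \sum_(i in D) marg f [set o i] Xs <= \sum_(i in D) gain i.
  apply: ler_sum => i _; apply: le_trans (gx i (o i) (forallP po i)).
  by apply: (marg_antimonotone fF); apply/imsetS/subsetT.
have gain_le_single : \sum_(i in D) gain i <= \sum_(i in D) f [set x i].
  by apply: ler_sum => i _; apply: (marg_le_single fF).
have gain_D : \sum_(i in D) gain i <= \sum_i gain i.
  by rewrite [leRHS](bigID (mem D)) /= lerDl sumr_ge0 // => i _; apply: (marg_ge0 fF).
move: curv mono submod opt_gain gain_le_single gain_D; rewrite /fval -/Os -/Xs.
set a := \sum_(i in D) gain i; set b := \sum_(i in D) f _; set G := \sum_i gain i.
(* f Os + (1 - lam) b <= f (Xs :|: Os) <= f Xs + a, with a <= b and a <= G *)
move=> *; nra.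
Qed.

End GreedyOutcome.

Lemma sum_marg_chain (R : realType) (S : finType) n (f : {set S} -> R)
    (x : 'I_n -> S) (C : {set 'I_n}) :
  f set0 = 0 ->
  \sum_(i in C) marg f [set x i] [set x j | j in [set j in C | (j < i)%N]]
    = f [set x i | i in C].
Proof.
move=> f0; pose u k := f [set x j | j in [set j in C | (j < k)%N]].
have step (i : 'I_n) : u i.+1 - u i =
    if i \in C then marg f [set x i] [set x j | j in [set j in C | (j < i)%N]] else 0.
  rewrite /u; have -> : [set j in C | (j < i.+1)%N]
                         = [set j in C | j == i] :|: [set j in C | (j < i)%N].
    by apply/setP => j; rewrite !inE ltnS leq_eqVlt andb_orr.
  case: ifP => iC.
    have -> : [set j in C | j == i] = [set i].
      by apply/setP => j; rewrite !inE andbC; case: eqP => // ->.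
    by rewrite /marg imsetU1.
  have -> : [set j in C | j == i] = set0.
    by apply/setP => j; rewrite !inE andbC; case: eqP => // ->; rewrite iC.
  by rewrite set0U subrr.
have := telescope_sumr u (leq0n n).
rewrite big_mkord (eq_bigr _ (fun i _ => step i)) -big_mkcond /= => ->; rewrite /u.
have -> : [set j in C | (j < 0)%N] = set0 by apply/setP => j; rewrite !inE andbF.
have -> : [set j in C | (j < n)%N] = C by apply/setP => j; rewrite !inE ltn_ord andbT.
by rewrite imset0 f0 subr0.
Qed.

Lemma nbrs_modgraph n r (i : 'I_n) :
  nbrs (modgraph n r) i = [set j in [set j : 'I_n | (j %% r == i %% r)%N] | (j < i)%N].
Proof.
apply/setP => j; rewrite !inE /modgraph andbC.
by case: (ltnP j i) => ji; rewrite ?andbF //= -val_eqE /= neq_ltn ji.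
Qed.

Section ModGraphGreedy.
Variables (R : realType) (S : finType) (lam : R) (f : {set S} -> R).
Variables (n r : nat) (X : 'I_n -> {set S}) (x : {ffun 'I_n -> S}).
Hypotheses (fF : in_F lam f) (lam01 : 0 < lam < 1) (r_gt0 : (0 < r)%N)
  (partX : is_partition X) (greedy_x : is_greedy f X (modgraph n r) x).

Local Notation gain := (greedy_gain f (modgraph n r) x).
Local Notation residue c := [set i : 'I_n | (i %% r == c)%N].

Lemma sum_gain_residue c : \sum_(i in residue c) gain i = f (xset x (residue c)).
Proof.
rewrite -sum_marg_chain; last by case: fF.
by apply: eq_bigr => i; rewrite inE => /eqP ic; rewrite /greedy_gain nbrs_modgraph ic.
Qed.

Lemma residue_gain_bound c :
  (1 - lam) * \sum_i gain i + lam * \sum_(i in residue c) gain i <= fval f x.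
Proof.
have [lam0 lam1] := andP lam01; have x_inj := greedy_injective partX greedy_x.
have dis : [disjoint [set x i | i in ~: residue c] & [set x i | i in residue c]].
  by rewrite imset_disjoint // disjoints_subset.
have := curvature_sum_bound fF dis.
rewrite -imsetU setUC setUCr big_imset /=; last by move=> i j _ _; apply: x_inj.
rewrite -sum_gain_residue -/(fval f x).
have : \sum_(i in ~: residue c) gain i <= \sum_(i in ~: residue c) f [set x i].
  by apply: ler_sum => i _; apply: (marg_le_single fF).
rewrite [\sum_i gain i](bigID (mem (residue c))) /=.
under [\sum_(i | ~~ _) _]eq_bigl => i do rewrite -in_setC.
set a := \sum_(i in residue c) _; set b := \sum_(i in ~: residue c) gain i.
set d := \sum_(i in ~: residue c) _; move=> *; nra.
Qed.

Lemma greedy_gain_sum_bound :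
  (r%:R - (r%:R - 1) * lam) * \sum_i gain i <= r%:R * fval f x.
Proof.
have sum_residues : \sum_(c < r) \sum_(i in residue c) gain i = \sum_i gain i.
  rewrite (partition_big (fun i : 'I_n => Ordinal (ltn_pmod i r_gt0)) xpredT) //=.
  by apply: eq_bigr => c _; apply: eq_bigl => i; rewrite inE -val_eqE.
have : \sum_(c < r) ((1 - lam) * \sum_i gain i + lam * \sum_(i in residue c) gain i)
    <= \sum_(c < r) fval f x.
  by apply: ler_sum => c _; apply: residue_gain_bound.
rewrite big_split /= -mulr_sumr -[\sum_(c < r) lam * _]mulr_sumr sum_residues !sumr_const card_ord.
have -> : (r%:R - (r%:R - 1) * lam) * \sum_i gain i
    = (1 - lam) * (r%:R * \sum_i gain i) + lam * \sum_i gain i by ring.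
by rewrite !mulr_natl.
Qed.

Lemma modgraph_greedy_ratio (o : {ffun 'I_n -> S}) : is_profile X o ->
  (r%:R - (r%:R - 1) * lam) * fval f o <= (r%:R + lam) * fval f x.
Proof.
move=> po; have [lam0 lam1] := andP lam01.
have opt := opt_le_greedy_add_gain fF lam01 partX greedy_x po.
have gsum := greedy_gain_sum_bound.
have r1 : 1 <= r%:R :> R by rewrite ler1n.
move: opt gsum; set G := \sum_i gain i; set c := r%:R - _ => opt gsum.
have c_ge0 : 0 <= c by rewrite /c; nra.
have := ler_wpM2l c_ge0 opt; move: gsum; rewrite /c; nra.
Qed.

End ModGraphGreedy.

Section ApproximationRatio.
Variables (R : realType) (S : finType) (n : nat) (f : {set S} -> R).
Variables (X : 'I_n -> {set S}) (e : rel 'I_n).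

Lemma fval_le_fopt o : is_profile X o -> fval f o <= fopt f X.
Proof. exact: le_bigmax_cond. Qed.

Lemma fopt_attained o : nonnegf f -> is_profile X o ->
  exists2 o', is_profile X o' & fopt f X = fval f o'.
Proof.
move=> f_ge0 po; rewrite /fopt.
have [|o' po' ->] := Order.TotalTheory.eq_bigmax (x := 0) o (is_profile X) (fval f) po.
  by move=> ? _; apply: f_ge0.
by exists o'.
Qed.

Lemma gamma_fXG_le x : nonnegf f -> 0 < fopt f X -> is_greedy f X e x ->
  gamma_fXG f X e <= fval f x / fopt f X.
Proof.
move=> f_ge0 opt_gt0 gx; apply: ge_inf; last by exists x.
by exists 0 => _ [y _ <-]; apply: divr_ge0 (f_ge0 _) (ltW opt_gt0).
Qed.

Lemma gamma_fXG_ge k : nonnegf f -> (forall i, X i != set0) -> 0 < fopt f X ->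
    (forall x o, is_greedy f X e x -> is_profile X o -> k * fval f o <= fval f x) ->
  k <= gamma_fXG f X e.
Proof.
move=> f_ge0 X0 opt_gt0 ratio; have [x gx] := greedy_exists f e X0.
apply: lb_le_inf => [|_ [y gy <-]]; first by exists (fval f x / fopt f X), x.
have [o po opt_o] := fopt_attained f_ge0 (proj1 gy).
by rewrite ler_pdivlMr // opt_o ratio.
Qed.

End ApproximationRatio.

Lemma cardsU1I (T : finType) (a : T) (A C : {set T}) :
  a \notin A -> #|(a |: A) :&: C| = ((a \in C) + #|A :&: C|)%N.
Proof.
move=> aA; rewrite setIUl; case: (boolP (a \in C)) => aC.
  by rewrite (setIidPl _) ?sub1set // cardsU1 inE (negbTE aA).
by rewrite (_ : [set a] :&: C = set0) ?set0U //; apply/disjoint_setI0; rewrite disjoints1.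
Qed.

Definition independent n (e : rel 'I_n) (I : {set 'I_n}) := {in I &, forall i j, ~~ e i j}.

(* Agent i chooses between its lure (i, true) and its target (i, false), and only the agents
   of I count.  The first lure is worth 1 and every further one 1 - lam, while targets are
   modular.  An agent of an independent set I sees no choice of I, finds both options worth 1
   and may take its lure: m - (m - 1) lam in total, against m for the targets. *)
Section HardInstance.
Variables (R : realType) (lam : R) (n : nat) (I : {set 'I_n}).
Hypothesis lam01 : 0 < lam < 1.

Definition tagged (b : bool) : {set 'I_n * bool} := [set p | (p.1 \in I) && (p.2 == b)].
Local Notation lures := (tagged true).
Local Notation targets := (tagged false).

Definition lure_value (k : nat) : R := if k is 0 then 0 else k%:R - (k%:R - 1) * lam.
Definition lure_step (k : nat) : R := if k is 0 then 1 else 1 - lam.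

Definition hard_fun (A : {set 'I_n * bool}) : R :=
  lure_value #|A :&: lures| + #|A :&: targets|%:R.

Definition pair_sets (i : 'I_n) : {set 'I_n * bool} := [set (i, true); (i, false)].
Definition column (b : bool) : {ffun 'I_n -> 'I_n * bool} := [ffun i => (i, b)].

Lemma lure_value_addb (b : bool) k : lure_value (b + k) = lure_value k + b%:R * lure_step k.
Proof. by case: b; case: k => [|k] //=; rewrite ?natrS; ring. Qed.

Lemma lure_step_bounds k : 1 - lam <= lure_step k <= 1.
Proof. by have [lam0 lam1] := andP lam01; case: k => [|k] /=; apply/andP; split; lra. Qed.

Lemma lure_step_antimonotone k k' : (k <= k')%N -> lure_step k' <= lure_step k.
Proof. by have [lam0 lam1] := andP lam01; case: k => [|k]; case: k' => [|k'] //= _; lra. Qed.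

Lemma lure_value_ge0 k : 0 <= lure_value k.
Proof.
have [lam0 lam1] := andP lam01; case: k => [|k] //=.
by have := ler0n R k; rewrite -natr1; nra.
Qed.

Lemma marg_hard_fun y (A : {set 'I_n * bool}) : y \notin A ->
  marg hard_fun [set y] A = (y \in lures)%:R * lure_step #|A :&: lures| + (y \in targets)%:R.
Proof. by move=> yA; rewrite /marg /hard_fun !cardsU1I // lure_value_addb natrD; ring. Qed.

Lemma hard_fun0 : hard_fun set0 = 0.
Proof. by rewrite /hard_fun !set0I !cards0 addr0. Qed.

Lemma hard_fun_in_F : in_F lam hard_fun.
Proof.
have [lam0 lam1] := andP lam01.
have hard_marg_ge0 y (A : {set 'I_n * bool}) : 0 <= marg hard_fun [set y] A.
  have [yA|yA] := boolP (y \in A); first by rewrite /marg (setUidPr _) ?subrr ?sub1set.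
  have := lure_step_bounds #|A :&: lures|.
  rewrite marg_hard_fun //; case: (y \in lures); case: (y \in targets) => /= /andP[]; lra.
split.
- by move=> A; rewrite addr_ge0 ?lure_value_ge0.
- exact: hard_fun0.
- exact: hard_marg_ge0.
- move=> A B y AB yB; have yA : y \notin A by apply: contra yB; apply: (subsetP AB).
  rewrite !marg_hard_fun // lerD2r ler_wpM2l ?ler0n // lure_step_antimonotone //.
  by rewrite subset_leq_card // setSI.
- move=> y A yA.
  have -> : hard_fun [set y] = marg hard_fun [set y] set0.
    by rewrite /marg setU0 hard_fun0 subr0.
  rewrite !marg_hard_fun ?in_set0 // set0I cards0 /=.
  have := lure_step_bounds #|A :&: lures|.
  by case: (y \in lures); case: (y \in targets) => /= /andP[]; lra.
Qed.

Lemma pair_sets_partition : is_partition pair_sets.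
Proof.
split.
- by move=> i; apply/set0Pn; exists (i, true); rewrite !inE eqxx.
- move=> i j ij; rewrite -setI_eq0; apply/eqP/setP => -[k b]; rewrite !inE !xpair_eqE.
  case: (eqVneq k i) => [ki|] //=; case: (eqVneq k j) => [kj|] /=; last by rewrite !andbF.
  by move: ij; rewrite -ki -kj eqxx.
- by move=> [i b]; exists i; rewrite !inE !xpair_eqE eqxx; case: b.
Qed.

Lemma marg_lure_column (e : rel 'I_n) i y : independent e I -> y.1 = i ->
  marg hard_fun [set y] (xset (column true) (nbrs e i)) = (i \in I)%:R.
Proof.
case: y => k b indI /= ->.
have yN : (i, b) \notin xset (column true) (nbrs e i).
  by apply/imsetP => -[j]; rewrite inE ffunE => /andP [ji _] [ij _]; rewrite ij ltnn in ji.
rewrite (marg_hard_fun yN) {yN} !inE /=.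
have [iI|iI] := boolP (i \in I); last by rewrite mul0r addr0.
have -> : xset (column true) (nbrs e i) :&: lures = set0.
  apply/setP => p; rewrite !inE; apply/negbTE/andP => -[/imsetP [j jN ->]].
  rewrite ffunE /= andbT => jI; move: jN; rewrite inE => /andP [_ eji].
  by move: (indI j i jI iI); rewrite eji.
by rewrite cards0; case: b; rewrite /= ?mul1r ?mul0r ?addr0 ?add0r.
Qed.

Lemma lure_column_greedy (e : rel 'I_n) :
  independent e I -> is_greedy hard_fun pair_sets e (column true).
Proof.
move=> indI; split; first by apply/forallP => i; rewrite ffunE !inE eqxx.
by move=> i y; rewrite !inE => /orP [] /eqP -> ; rewrite !marg_lure_column ?ffunE.
Qed.

Lemma tagged_column b c :
  xset (column b) [set: 'I_n] :&: tagged c = if b == c then [set (i, b) | i in I] else set0.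
Proof.
apply/setP => p; have [<-|bc] := eqVneq b c; rewrite !inE; last first.
  by apply/negbTE/andP => -[/imsetP [j _ ->]]; rewrite ffunE /= (negbTE bc) andbF.
apply/andP/imsetP => [[/imsetP [j _ ->]] | [j jI ->]].
  by rewrite ffunE /= eqxx andbT => jI; exists j.
by split; [apply/imsetP; exists j; rewrite ?ffunE | rewrite /= jI eqxx].
Qed.

Lemma fval_column b :
  fval hard_fun (column b) = if b then lure_value #|I| else #|I|%:R.
Proof.
have pair_inj : injective (fun i : 'I_n => (i, b)) by move=> i j [].
case: b pair_inj => inj; rewrite /fval /hard_fun !tagged_column /= cards0 (card_imset _ inj).
  by rewrite addr0.
by rewrite add0r.
Qed.

Lemma fopt_hard_fun_ge : #|I|%:R <= fopt hard_fun pair_sets.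
Proof.
rewrite -(fval_column false); apply: fval_le_fopt.
by apply/forallP => i; rewrite ffunE !inE eqxx orbT.
Qed.

Lemma gamma_hard_fun_le (e : rel 'I_n) : independent e I -> (0 < #|I|)%N ->
  gamma_fXG hard_fun pair_sets e <= lure_value #|I| / #|I|%:R.
Proof.
move=> indI I_gt0; have opt_gt0 : 0 < fopt hard_fun pair_sets.
  by apply: lt_le_trans fopt_hard_fun_ge; rewrite ltr0n.
apply: le_trans (gamma_fXG_le _ opt_gt0 (lure_column_greedy indI)) _.
  by case: hard_fun_in_F.
rewrite fval_column ler_wpM2l ?lure_value_ge0 // lef_pV2 ?posrE ?ltr0n //.
exact: fopt_hard_fun_ge.
Qed.

End HardInstance.

Lemma pigeonhole_fiber (T U : finType) (p : T -> U) :
  (0 < #|U|)%N -> exists u, (#|T| <= #|U| * #|[set t | p t == u]|)%N.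
Proof.
move=> U_gt0; have [u umax] := bigop.eq_bigmax (fun u => #|[set t | p t == u]|) U_gt0.
exists u; have -> : #|T| = \sum_(t in T) 1 by rewrite sum1_card.
rewrite (partition_big p xpredT) //= -umax -sum_nat_const.
apply: leq_sum => v _; apply: leq_trans (leq_bigmax v); rewrite -sum1_card.
by apply: eq_leq; apply: eq_bigl => t; rewrite inE.
Qed.

Section Pbar.
Variables (n : nat) (e : rel 'I_n).

Lemma pbar_fuel_stable k k' (i : 'I_n) :
  (i < k)%N -> (k <= k')%N -> pbar_fuel e k' i = pbar_fuel e k i.
Proof.
elim: k k' i => [|k IHk] [|k'] i //= ik kk'; congr S.
by apply: eq_bigr => j /andP [ji _]; apply: IHk; rewrite ?(leq_trans ji).
Qed.

Lemma pbar_gt0 i : (0 < pbar e i)%N.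
Proof. by rewrite /pbar; case: {2}n. Qed.

Lemma pbar_lt_nbr (i j : 'I_n) : (j < i)%N -> e j i -> (pbar e j < pbar e i)%N.
Proof.
move=> ji eji; rewrite /pbar (pbar_fuel_stable (ltnSn i) (ltn_ord i)).
rewrite (pbar_fuel_stable ji (ltnW (ltn_ord i))) /= ltnS.
by apply: leq_bigmax_cond; rewrite ji eji.
Qed.

End Pbar.

Lemma pbar_modgraph n r (i : 'I_n) : (0 < r)%N -> pbar (modgraph n r) i = (i %/ r).+1.
Proof.
move=> r_gt0; rewrite /pbar.
suff fuel_ok k (j : 'I_n) : (j %/ r < k)%N -> pbar_fuel (modgraph n r) k j = (j %/ r).+1.
  by apply: fuel_ok; rewrite (leq_ltn_trans (leq_div i r)).
elim: k j => [|k IHk] j // jk /=; congr S; apply/eqP; rewrite eqn_leq; apply/andP; split.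
  apply/bigmax_leqP => l /andP [lj /andP [_ /eqP lj_mod]].
  have : (l %/ r < j %/ r)%N.
    by rewrite -(ltn_pmul2r r_gt0) -(ltn_add2r (j %% r)) -{1}lj_mod -!divn_eq.
  by move=> lj_div; rewrite IHk //; lia.
have [->|jr_gt0] := posnP (j %/ r); first by [].
have rj : (r <= j)%N by rewrite -divn_gt0.
have jE : nat_of_ord j = (j - r + r)%N by rewrite subnK.
pose l : 'I_n := Ordinal (leq_ltn_trans (leq_subr r j) (ltn_ord j)).
have l_div : (j %/ r = l %/ r + 1)%N by rewrite /= {1}jE divnDr ?dvdnn // divnn r_gt0.
have l_nbr : (l < j)%N && modgraph n r l j.
  have lj : (l < j)%N by rewrite /= ltn_subrL r_gt0 (leq_trans r_gt0 rj).
  by rewrite lj /modgraph -val_eqE /= (ltn_eqF lj) [in X in (_ == X %% _)%N]jE modnDr eqxx.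
apply: leq_trans _ (leq_bigmax_cond (F := pbar_fuel (modgraph n r) k) l l_nbr).
rewrite IHk; lia.
Qed.

Lemma independent_level n q (e : rel 'I_n) : (0 < q)%N -> in_Gnq q e ->
  exists I : {set 'I_n}, (n <= q * #|I|)%N /\ independent e I.
Proof.
case: q => [//|q] _ [[e_sym e_irr] pbar_le].
have levels_gt0 : (0 < #|'I_q.+1|)%N by rewrite card_ord.
have [l l_big] := pigeonhole_fiber (fun i => inord (pbar e i).-1 : 'I_q.+1) levels_gt0.
rewrite !card_ord in l_big; exists [set i | inord (pbar e i).-1 == l]; split=> // i j.
rewrite !inE => /eqP il /eqP jl; rewrite -{}jl in il.
have same_pbar : pbar e i = pbar e j.
  have level_lt k : ((pbar e k).-1 < q.+1)%N by have := pbar_le k; lia.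
  move/(congr1 val): il; rewrite /= !inordK //.
  by have := pbar_gt0 e i; have := pbar_gt0 e j; lia.
apply/negP => eij; have [ij|ji|ij] := ltngtP i j.
- by move: (pbar_lt_nbr ij eij); rewrite same_pbar ltnn.
- have eji : e j i by rewrite e_sym.
  by move: (pbar_lt_nbr ji eji); rewrite same_pbar ltnn.
- by move: eij; rewrite (val_inj ij) e_irr.
Qed.

Lemma curvature_ratio_antimonotone (R : realType) (lam : R) r m :
  0 <= lam -> (0 < r <= m)%N ->
  (m%:R - (m%:R - 1) * lam) / m%:R <= (r%:R - (r%:R - 1) * lam) / r%:R.
Proof.
move=> lam0 /andP [r_gt0 rm]; have m_gt0 := leq_trans r_gt0 rm.
rewrite ler_pdivrMr ?ltr0n // mulrAC ler_pdivlMr ?ltr0n //.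
have : r%:R <= m%:R :> R by rewrite ler_nat.
by move=> *; nra.
Qed.

Section GammaLam.
Variables (R : realType) (lam : R) (n : nat) (e : rel 'I_n).
Hypothesis lam01 : 0 < lam < 1.

Lemma gamma_lam_le (S : finType) (f : {set S} -> R) (X : 'I_n -> {set S}) :
  in_F lam f -> is_partition X -> 0 < fopt f X -> gamma_lam lam e <= gamma_fXG f X e.
Proof.
move=> fF partX opt_gt0; apply: ge_inf; last by exists S, f, X.
exists 0 => _ [S' [f' [X' [f'F partX' opt'_gt0 ->]]]].
have [f'_ge0 _ _ _ _] := f'F; have [X'0 _ _] := partX'.
by apply: gamma_fXG_ge => // x o _ _; rewrite mul0r; apply: f'_ge0.
Qed.

Lemma gamma_lam_ge k : (0 < n)%N ->
    (forall (S : finType) (f : {set S} -> R) (X : 'I_n -> {set S}),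
       in_F lam f -> is_partition X -> 0 < fopt f X -> k <= gamma_fXG f X e) ->
  k <= gamma_lam lam e.
Proof.
move=> n_gt0 bound; apply: lb_le_inf => [|_ [S [f [X [fF partX opt_gt0 ->]]]]]; last exact: bound.
have opt_gt0 : 0 < fopt (hard_fun lam [set: 'I_n]) (@pair_sets n).
  by apply: lt_le_trans (fopt_hard_fun_ge lam _); rewrite cardsT card_ord ltr0n.
exists (gamma_fXG (hard_fun lam [set: 'I_n]) (@pair_sets n) e), _, (hard_fun lam [set: 'I_n]).
by exists (@pair_sets n); split=> //; [apply: hard_fun_in_F | apply: pair_sets_partition].
Qed.

End GammaLam.

Lemma gamma_lam_upper (R : realType) (lam : R) n q r (e : rel 'I_n) :
  0 < lam < 1 -> (0 < q)%N -> (0 < r)%N -> (q * r < n + q)%N -> in_Gnq q e ->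
  gamma_lam lam e <= (r%:R - (r%:R - 1) * lam) / r%:R.
Proof.
move=> lam01 q_gt0 r_gt0 qr_lt Ge; have [I [nI indI]] := independent_level q_gt0 Ge.
have rI : (r <= #|I|)%N by nia.
have I_gt0 := leq_trans r_gt0 rI.
have opt_gt0 : 0 < fopt (hard_fun lam I) (@pair_sets n).
  by apply: lt_le_trans (fopt_hard_fun_ge lam _); rewrite ltr0n.
apply: le_trans (gamma_lam_le e (hard_fun_in_F I lam01) (@pair_sets_partition n) opt_gt0) _.
apply: le_trans (gamma_hard_fun_le lam01 indI I_gt0) _.
move: I_gt0 rI; rewrite /lure_value; case: #|I| => [//|m] _ rm.
by apply: curvature_ratio_antimonotone; rewrite ?r_gt0 ?ltW //; case/andP: lam01.
Qed.

Lemma modgraph_in_Gnq n q r : (0 < r)%N -> (n <= q * r)%N -> in_Gnq q (modgraph n r).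
Proof.
move=> r_gt0 nqr; split; first split.
- by move=> i j; rewrite /modgraph eq_sym [X in _ && X]eq_sym.
- by move=> i; rewrite /modgraph eqxx.
- by move=> i; rewrite pbar_modgraph // ltn_divLR //; have := ltn_ord i; nia.
Qed.

Lemma gamma_lam_modgraph (R : realType) (lam : R) n r :
  0 < lam < 1 -> (0 < n)%N -> (0 < r)%N ->
  (r%:R - (r%:R - 1) * lam) / (r%:R + lam) <= gamma_lam lam (modgraph n r).
Proof.
move=> lam01 n_gt0 r_gt0; apply: gamma_lam_ge => // S f X fF partX opt_gt0.
have [f_ge0 _ _ _ _] := fF; have [X0 _ _] := partX.
have rlam_gt0 : 0 < r%:R + lam by rewrite ltr_wpDl ?ler0n //; case/andP: lam01.
apply: gamma_fXG_ge => // x o gx po; rewrite mulrAC ler_pdivrMr // [leRHS]mulrC.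
exact: (modgraph_greedy_ratio fF lam01 r_gt0 partX gx po).
Qed.

Unset Implicit Arguments.
Theorem theorem3 (R : realType) (n q : nat) (lam : R) :
  (1 <= q)%N -> (q <= n)%N -> 0 < lam < 1 ->
  let r : nat := ((n + q - 1) %/ q)%N in
  [/\ eta_lam lam n q <= (r%:R - (r%:R - 1) * lam) / r%:R,
      (r%:R - (r%:R - 1) * lam) / (r%:R + lam) <= eta_lam lam n q,
      in_Gnq q (modgraph n r),
      (forall i : 'I_n, pbar (modgraph n r) i = ((i.+1 + r - 1) %/ r)%N)
    & (r%:R - (r%:R - 1) * lam) / (r%:R + lam) <= gamma_lam lam (modgraph n r)].
Proof.
move=> q_gt0 qn lam01 r.
have n_gt0 : (0 < n)%N := leq_trans q_gt0 qn.
have r_gt0 : (0 < r)%N by rewrite divn_gt0 //; lia.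
have n_le_qr : (n <= q * r)%N.
  by have := divn_eq (n + q - 1) q; have := ltn_pmod (n + q - 1) q_gt0; rewrite -/r; nia.
have qr_lt : (q * r < n + q)%N by rewrite mulnC (leq_ltn_trans (leq_divM _ _)) //; lia.
have G_mod := modgraph_in_Gnq r_gt0 n_le_qr.
have upper (e : rel 'I_n) : in_Gnq q e -> gamma_lam lam e <= (r%:R - (r%:R - 1) * lam) / r%:R.
  exact: gamma_lam_upper lam01 q_gt0 r_gt0 qr_lt.
have lower := gamma_lam_modgraph lam01 n_gt0 r_gt0.
split=> //.
- apply: ge_sup => [|_ [e [Ge ->]]]; last exact: upper.
  by exists (gamma_lam lam (modgraph n r)), (modgraph n r).
- apply: le_trans lower (ub_le_sup _ _); last by exists (modgraph n r).
  by exists ((r%:R - (r%:R - 1) * lam) / r%:R) => _ [e [Ge ->]]; apply: upper.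
- by move=> i; rewrite pbar_modgraph // addSn subn1 /= divnDr ?dvdnn // divnn r_gt0 addn1.
Qed.
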